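(* For every $n\ge 2$, letting $P_n$ denote the path on $n$ vertices: (i) ${\rm I}_e(P_n)=\frac{n-1}{3}$ if $n\equiv 1 \pmod 3$; (ii) ${\rm I}_e(P_n)=\left\lceil\frac{n-1}{3}\right\rceil$ if $n\equiv 2 \pmod 3$; (iii) ${\rm I}_e(P_n)=\left\lfloor\frac{n-1}{3}\right\rfloor$ if $n\equiv 0\pmod 3$. Moreover, for every $n\ge 3$, letting $C_n$ denote the cycle on $n$ vertices, ${\rm I}_e(C_n)={\rm I}_e(P_n)+1$.
   Context: All graphs are finite and simple. A graph is locally irregular if no two adjacent vertices have the same degree. An edge-irregulator of a graph $G$ is a set $S\subseteq E(G)$ such that $G-S$ is locally irregular; ${\rm I}_e(G)$ is the minimum cardinality of an edge-irregulator of $G$. *)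

From mathcomp Require Import all_boot.
Set Implicit Arguments. Unset Strict Implicit. Unset Printing Implicit Defensive.

(* A finite simple graph on vertex type T is given by a symmetric irreflexive
   adjacency relation adj : rel T.  Edges are the 2-element vertex sets {x,y}. *)

Section Graphs.
Variable T : finType.
Variable adj : rel T.

Definition edge_set : {set {set T}} :=
  [set [set x; y] | x in T, y in T & adj x y].

Definition adj_minus (S : {set {set T}}) : rel T :=
  fun x y => adj x y && ([set x; y] \notin S).

Definition deg (r : rel T) (x : T) : nat := #|[set y | r x y]|.

Definition locally_irregularb (r : rel T) : bool :=
  [forall x, forall y, r x y ==> (deg r x != deg r y)].

(* The whole edge set is
   always an edge-irregulator (G - E(G) has no edges), so the default value
   #|edge_set| of the min-fold is attained and this is the true minimum. *)
Definition Ie : nat :=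
  \big[minn/#|edge_set|]_(S in powerset edge_set
                          | locally_irregularb (adj_minus S)) #|S|.

End Graphs.

Definition path_adj (n : nat) : rel 'I_n :=
  fun i j => (i.+1 == j :> nat) || (j.+1 == i :> nat).

Definition cycle_adj (n : nat) : rel 'I_n :=
  fun i j => (j == i.+1 %% n :> nat) || (i == j.+1 %% n :> nat).

Arguments path_adj n : clear implicits.
Arguments cycle_adj n : clear implicits.

Definition ceil_div (a b : nat) : nat := (a + b - 1) %/ b.

From mathcomp Require Import all_boot order zify.
Set Implicit Arguments. Unset Strict Implicit. Unset Printing Implicit Defensive.
Import Order.TTheory.

(* Removing an edge set S from P_n or C_n leaves a union of paths, and the
   result is locally irregular exactly when every remaining edge has exactly
   one remaining neighbouring edge, i.e. when every component with an edge is
   a P_3.  These components are vertex-disjoint, so at most 2 * (n %/ 3) edges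
   survive, and cutting the vertices into consecutive triples attains this
   bound.  Hence I_e(P_n) = (n - 1) - 2 * (n %/ 3), which gives the three
   residue cases, and I_e(C_n) = n - 2 * (n %/ 3): the 2-regular C_n must lose
   an edge, after which the same count applies to its n edges. *)

Section MinimumIrregulator.
Variables (T : finType) (adj : rel T).

Lemma locally_irregular_minus_edge_set :
  locally_irregularb (adj_minus adj (edge_set adj)).
Proof.
apply/forallP => x; apply/forallP => y; apply/implyP => /andP[xy].
by case/negP; apply/imset2P; exists x y; rewrite ?inE.
Qed.

Lemma Ie_le_card (S : {set {set T}}) : S \subset edge_set adj ->
  locally_irregularb (adj_minus adj S) -> Ie adj <= #|S|.
Proof.
by move=> sub irr; apply: (@bigmin_le_cond _ nat); rewrite powersetE sub.
Qed.

Lemma Ie_ge m :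
  (forall S : {set {set T}}, S \subset edge_set adj ->
     locally_irregularb (adj_minus adj S) -> m <= #|S|) ->
  m <= Ie adj.
Proof.
move=> lb; rewrite /Ie -minEnat; apply: (@le_bigmin _ nat).
  exact/lb/locally_irregular_minus_edge_set.
by move=> S; rewrite powersetE => /andP[]; apply: lb.
Qed.

End MinimumIrregulator.

Section IndexedEdges.
Variables (T : finType) (adj : rel T) (m : nat) (E : nat -> {set T}).
Hypothesis edge_setE : forall X, X \in edge_set adj -> exists2 i, i < m & X = E i.
Hypothesis E_edge : forall i, i < m -> E i \in edge_set adj.
Hypothesis E_inj : {in [pred i | i < m] &, injective E}.

Lemma card_edge_subset (S : {set {set T}}) : S \subset edge_set adj ->
  #|S| = m - \sum_(i < m) (E i \notin S).
Proof.
move=> sub; pose A := [set i : 'I_m | E i \in S].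
have SE : S = [set E i | i : 'I_m in A].
  apply/setP => X; apply/idP/imsetP => [XS | [i Ai ->]].
    have [i im eX] := edge_setE (subsetP sub X XS).
    by exists (Ordinal im); rewrite ?inE -?eX.
  by move: Ai; rewrite /A inE.
rewrite [in LHS]SE card_in_imset => [|i j _ _ /(E_inj (ltn_ord i) (ltn_ord j))];
  last exact: val_inj.
have -> : \sum_(i < m) (E i \notin S) = #|~: A|.
  rewrite -sum1_card [RHS]big_mkcond /=.
  by apply: eq_bigr => i _; rewrite !inE; case: (E i \in S).
by have := cardsC A; rewrite card_ord; lia.
Qed.

Definition removed_edges (keep : nat -> bool) : {set {set T}} :=
  [set E i | i : 'I_m & ~~ keep i].

Lemma removed_edges_sub keep : removed_edges keep \subset edge_set adj.
Proof. by apply/subsetP => X /imsetP[i _ ->]; apply/E_edge. Qed.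

Lemma notin_removed_edges keep i : i < m -> (E i \notin removed_edges keep) = keep i.
Proof.
move=> im; apply/idP/idP => [|ki].
  by apply: contraNT => nki; apply/imsetP; exists (Ordinal im); rewrite ?inE.
apply/imsetP => -[j]; rewrite inE => nkj /(E_inj im (ltn_ord j)) eij.
by rewrite -eij ki in nkj.
Qed.

End IndexedEdges.

Lemma sum_paired_le (c : nat -> bool) N : ~~ c 0 -> ~~ c N ->
  (forall i, 0 < i < N -> c i -> c i.-1 != c i.+1) ->
  \sum_(0 <= i < N) c i <= 2 * (N %/ 3).
Proof.
move=> c0 cN paired.
suff: forall k, k <= N -> ~~ c k -> \sum_(0 <= i < k) c i <= 2 * (k %/ 3) by apply.
elim/ltn_ind=> -[_ _ _ | k IH kN ck]; first by rewrite big_geq.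
rewrite big_nat_recr //=.
have [ck1 | nck1] := boolP (c k); last by have := IH k (ltnSn k) (ltnW kN) nck1; lia.
(* A run of kept positions ending at k has length exactly two and is preceded
   by a removed position, which is where the induction resumes. *)
case: k IH kN ck ck1 => [|[|j]] IH kN ck ck1; first by rewrite ck1 in c0.
  by have := paired 1 ltac:(lia) ck1; rewrite (negbTE c0) (negbTE ck).
have cj1 : c j.+1.
  by have := paired j.+2 ltac:(lia) ck1; rewrite /= (negbTE ck); case: (c _).
have ncj : ~~ c j.
  by have := paired j.+1 ltac:(lia) cj1; rewrite /= ck1; case: (c _).
rewrite !big_nat_recr //= (negbTE ncj) cj1.
by have := IH j ltac:(lia) ltac:(lia) ncj; lia.
Qed.

Lemma sum_periodic_shift (f : nat -> nat) N j : (forall i, f (i + N) = f i) ->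
  \sum_(0 <= i < N) f (j + i) = \sum_(0 <= i < N) f i.
Proof.
move=> fN; elim: j => // j <-.
have recl : \sum_(0 <= i < N.+1) f (j + i) = f j + \sum_(0 <= i < N) f (j.+1 + i).
  by rewrite big_nat_recl // addn0; under eq_bigr do rewrite addnS.
have recr : \sum_(0 <= i < N.+1) f (j + i) = \sum_(0 <= i < N) f (j + i) + f j.
  by rewrite big_nat_recr //= fN.
lia.
Qed.

(* Read as the edge {v - 1, v}, position v is kept for the edges {3k, 3k+1}
   and {3k+1, 3k+2} with 3k + 2 < 3 * (n %/ 3): the kept edges then form
   copies of P_3 on consecutive triples of vertices. *)
Definition kept_pattern (n v : nat) : bool := (v %% 3 != 0) && (v < 3 * (n %/ 3)).

Lemma kept_pattern_paired n v :
  kept_pattern n v -> kept_pattern n v.-1 != kept_pattern n v.+1.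
Proof. rewrite /kept_pattern; lia. Qed.

Lemma sum_kept_pattern n : \sum_(0 <= v < n) kept_pattern n v = 2 * (n %/ 3).
Proof.
have sum_mod3 q : \sum_(0 <= v < 3 * q) (v %% 3 != 0) = 2 * q.
  elim: q => [|q IH]; first by rewrite big_geq.
  rewrite mulnS add3n !big_nat_recr // IH.
  have -> : (3 * q) %% 3 = 0 by lia.
  have -> : (3 * q).+1 %% 3 = 1 by lia.
  have -> : (3 * q).+2 %% 3 = 2 by lia.
  rewrite /=; lia.
rewrite (big_cat_nat _ (n := 3 * (n %/ 3))) //=; last by lia.
rewrite -[RHS]addn0 -(sum_mod3 (n %/ 3)); congr (_ + _).
  by apply: eq_big_nat => v /andP[_ vn]; rewrite /kept_pattern vn andbT.
by rewrite big1_seq // => v /andP[_]; rewrite mem_index_iota /kept_pattern; lia.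
Qed.

Lemma sum_kept_pattern_succ n :
  \sum_(0 <= i < n) kept_pattern n i.+1 = 2 * (n %/ 3).
Proof.
have kpn : kept_pattern n n = false by rewrite /kept_pattern; lia.
have := @big_nat_recr _ 0 addn n 0 (kept_pattern n) (leq0n n).
by rewrite big_nat_recl // kpn /= addn0 sum_kept_pattern => <-.
Qed.

Lemma deg_two_candidates n (r : rel 'I_n) (x : 'I_n) (a b : nat) (p q : bool) :
  (forall y : 'I_n, r x y = ((y == a :> nat) && p) || ((y == b :> nat) && q)) ->
  (p -> q -> a != b) -> (p -> a < n) -> (q -> b < n) -> deg r x = p + q.
Proof.
rewrite /deg; case: p; case: q => rE ab an bn /=.
- have -> : [set y | r x y] = [set Ordinal (an isT); Ordinal (bn isT)].
    by apply/setP => y; rewrite !inE rE !andbT -!val_eqE.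
  by rewrite cards2 -val_eqE /= ab.
- have -> : [set y | r x y] = [set Ordinal (an isT)].
    by apply/setP => y; rewrite !inE rE !andbT andbF orbF -!val_eqE.
  by rewrite cards1.
- have -> : [set y | r x y] = [set Ordinal (bn isT)].
    by apply/setP => y; rewrite !inE rE !andbT andbF -!val_eqE.
  by rewrite cards1.
- have -> : [set y | r x y] = set0 by apply/setP => y; rewrite !inE rE !andbF.
  by rewrite cards0.
Qed.

Section Path.
Variable n : nat.

Definition path_edge (i : nat) : {set 'I_n} :=
  [set y : 'I_n | (y == i :> nat) || (y == i.+1 :> nat)].

(* Edges are indexed here by their upper endpoint, so that the degree of v in
   P_n - S is path_kept S v + path_kept S v.+1, with no special case at 0. *)
Definition path_kept (S : {set {set 'I_n}}) (v : nat) : bool :=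
  (0 < v < n) && (path_edge v.-1 \notin S).

Lemma path_edgeE (a b : 'I_n) : b = a.+1 :> nat -> [set a; b] = path_edge a.
Proof. by move=> ba; apply/setP => z; rewrite !inE -!val_eqE /= ba. Qed.

Lemma path_adj_minusE S (x y : 'I_n) : adj_minus (path_adj n) S x y =
  ((y == x.-1 :> nat) && path_kept S x) || ((y == x.+1 :> nat) && path_kept S x.+1).
Proof.
have xn := ltn_ord x; have yn := ltn_ord y.
rewrite /adj_minus /path_adj /path_kept.
have [/eqP yx | nyx] := boolP (x.+1 == y :> nat).
  have x1n : x.+1 < n by rewrite yx.
  rewrite (path_edgeE (esym yx)) -yx eqxx x1n /=.
  by have -> : (x.+1 == x.-1) = false by lia.
have [/eqP xy | nxy] := boolP (y.+1 == x :> nat).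
  have y1n : y.+1 < n by rewrite xy.
  rewrite setUC (path_edgeE (esym xy)) -xy /= eqxx y1n.
  by rewrite ltn_eqF // andFb orbF.
by apply/esym/norP; split; apply/negP => /and3P[/eqP ? ? ?]; lia.
Qed.

Lemma path_deg S (x : 'I_n) :
  deg (adj_minus (path_adj n) S) x = path_kept S x + path_kept S x.+1.
Proof.
apply: deg_two_candidates; first exact: path_adj_minusE.
- by move=> /andP[/andP[x_gt0 _] _]; lia.
- by move=> _; have := ltn_ord x; lia.
- by move=> /andP[/andP[_ ->] _].
Qed.

Lemma path_locally_irregularP S :
  reflect (forall v, 0 < v < n -> path_kept S v ->
             path_kept S v.-1 != path_kept S v.+1)
          (locally_irregularb (adj_minus (path_adj n) S)).
Proof.
apply: (iffP forallP) => [irr v vn kv | paired x].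
  have [v_gt0 v_lt] := andP vn.
  have /forallP/(_ (Ordinal v_lt))/implyP :=
    irr (Ordinal (leq_ltn_trans (leq_pred v) v_lt)).
  rewrite path_adj_minusE !path_deg /= prednK // eqxx kv orbT => /(_ isT).
  by case: (path_kept S v.-1); case: (path_kept S v.+1).
apply/forallP => y; apply/implyP; rewrite path_adj_minusE !path_deg.
case/orP => /andP[/eqP -> kx]; have vn := proj1 (andP kx).
  have := paired x vn kx; rewrite prednK ?(proj1 (andP vn)) // kx.
  by case: (path_kept S x.-1); case: (path_kept S x.+1).
have := paired x.+1 vn kx; rewrite /= kx.
by case: (path_kept S x); case: (path_kept S x.+2).
Qed.

Lemma path_edge_setE X :
  X \in edge_set (path_adj n) -> exists2 i, i < n.-1 & X = path_edge i.
Proof.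
case/imset2P => x y _; rewrite inE /path_adj => /orP[] /eqP yx ->.
  by exists x; [have := ltn_ord y; lia | exact: path_edgeE].
by exists y; [have := ltn_ord x; lia | rewrite setUC; exact: path_edgeE].
Qed.

Lemma path_edge_in i : i < n.-1 -> path_edge i \in edge_set (path_adj n).
Proof.
move=> i_lt; have i0n : i < n by lia.
have i1n : i.+1 < n by lia.
apply/imset2P; exists (Ordinal i0n) (Ordinal i1n); rewrite ?inE /path_adj ?eqxx //.
by rewrite (@path_edgeE (Ordinal i0n) (Ordinal i1n)).
Qed.

Lemma path_edge_inj : {in [pred i | i < n.-1] &, injective path_edge}.
Proof.
move=> i j; rewrite !inE => i_lt j_lt /setP eij.
have i0n : i < n by lia.
have i1n : i.+1 < n by lia.
have := eij (Ordinal i0n); have := eij (Ordinal i1n).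
by rewrite !inE /= !eqxx ?orbT; lia.
Qed.

End Path.

Lemma sum_path_kept n (S : {set {set 'I_n}}) :
  \sum_(i < n.-1) (path_edge n i \notin S) = \sum_(0 <= v < n) path_kept S v.
Proof.
case: n S => [|m] S; first by rewrite big_ord0 big_geq.
rewrite big_nat_recl //= big_mkord; apply: eq_bigr => i _.
by rewrite /path_kept /= ltnS (ltn_ord i : i < m).
Qed.

Lemma card_path_irregulator n (S : {set {set 'I_n}}) :
  S \subset edge_set (path_adj n) ->
  #|S| = n.-1 - \sum_(0 <= v < n) path_kept S v.
Proof.
move=> sub.
by rewrite (card_edge_subset (@path_edge_setE n) (@path_edge_inj n) sub) sum_path_kept.
Qed.

Lemma path_kept_pattern n v :
  path_kept (removed_edges n.-1 (path_edge n) (fun i => kept_pattern n i.+1)) v =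
  kept_pattern n v.
Proof.
rewrite /path_kept; have [vn | nvn] := boolP (0 < v < n); last first.
  by apply/esym/negbTE; apply: contra nvn; rewrite /kept_pattern; lia.
by rewrite (notin_removed_edges (@path_edge_inj n)) ?prednK //; lia.
Qed.

Lemma path_Ie_le n : Ie (path_adj n) <= n.-1 - 2 * (n %/ 3).
Proof.
pose S := removed_edges n.-1 (path_edge n) (fun i => kept_pattern n i.+1).
have sub : S \subset edge_set (path_adj n) by exact/removed_edges_sub/path_edge_in.
have -> : 2 * (n %/ 3) = \sum_(0 <= v < n) path_kept S v.
  by rewrite -sum_kept_pattern; apply: eq_bigr => v _; rewrite path_kept_pattern.
rewrite -card_path_irregulator //; apply: Ie_le_card sub _.
apply/path_locally_irregularP => v _; rewrite !path_kept_pattern.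
exact: kept_pattern_paired.
Qed.

Lemma path_Ie_ge n : n.-1 - 2 * (n %/ 3) <= Ie (path_adj n).
Proof.
apply: Ie_ge => S sub /path_locally_irregularP paired.
rewrite card_path_irregulator // leq_sub2l // sum_paired_le //.
by rewrite /path_kept ltnn andbF.
Qed.

Lemma path_Ie n : Ie (path_adj n) = n.-1 - 2 * (n %/ 3).
Proof. by apply/eqP; rewrite eqn_leq path_Ie_le path_Ie_ge. Qed.

Lemma modn_succ_ord n k : k < n -> k.+1 %% n = if k.+1 < n then k.+1 else 0.
Proof.
move=> kn; case: ifP => [k1n | k1n]; first by rewrite modn_small.
have -> : k.+1 = n by lia.
exact: modnn.
Qed.

Lemma modn_pred_ord n k : k < n -> (k + n.-1) %% n = if k == 0 then n.-1 else k.-1.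
Proof.
move=> kn; case: eqP => [-> | /eqP k_neq0].
  by rewrite add0n modn_small ?prednK; lia.
have -> : k + n.-1 = k.-1 + n by lia.
by rewrite modnDr modn_small; lia.
Qed.

Lemma eq_modn_succ_pred n a b : a < n -> b < n ->
  (a == b.+1 %% n) = (b == (a + n.-1) %% n).
Proof.
by move=> an bn; rewrite modn_succ_ord // modn_pred_ord //; do 2 case: ifP; lia.
Qed.

Section Cycle.
Variable n : nat.
Hypothesis n_ge3 : 3 <= n.

Definition cycle_edge (i : nat) : {set 'I_n} :=
  [set y : 'I_n | (y == i %% n :> nat) || (y == i.+1 %% n :> nat)].

Definition cycle_kept (S : {set {set 'I_n}}) (i : nat) : bool :=
  cycle_edge i \notin S.

Lemma cycle_edge_eqmod i j : i = j %[mod n] -> cycle_edge i = cycle_edge j.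
Proof.
move=> ij; apply/setP => z.
by rewrite !inE ij -[i.+1]addn1 -[j.+1]addn1 -modnDml ij modnDml.
Qed.

Lemma cycle_kept_eqmod S i j : i = j %[mod n] -> cycle_kept S i = cycle_kept S j.
Proof. by move=> /cycle_edge_eqmod ij; rewrite /cycle_kept ij. Qed.

Lemma cycle_kept_modn S i : cycle_kept S (i %% n) = cycle_kept S i.
Proof. exact/cycle_kept_eqmod/modn_mod. Qed.

Lemma cycle_kept_modnDl S i j : cycle_kept S (i %% n + j) = cycle_kept S (i + j).
Proof. exact/cycle_kept_eqmod/modnDml. Qed.

Lemma cycle_kept_addn S i : cycle_kept S (i + n) = cycle_kept S i.
Proof. exact/cycle_kept_eqmod/modnDr. Qed.

Lemma cycle_kept_succ_pred S i : cycle_kept S (i.+1 + n.-1) = cycle_kept S i.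
Proof. by apply: cycle_kept_eqmod; rewrite addSnnS prednK ?modnDr //; lia. Qed.

Lemma cycle_edgeE (a b : 'I_n) : b = a.+1 %% n :> nat -> [set a; b] = cycle_edge a.
Proof.
by move=> ba; apply/setP => z; rewrite !inE -!val_eqE /= ba (modn_small (ltn_ord a)).
Qed.

Lemma cycle_adj_minusE S (x y : 'I_n) : adj_minus (cycle_adj n) S x y =
  ((y == (x + n.-1) %% n :> nat) && cycle_kept S (x + n.-1)) ||
  ((y == x.+1 %% n :> nat) && cycle_kept S x).
Proof.
have xn := ltn_ord x; have yn := ltn_ord y.
rewrite /adj_minus /cycle_adj /cycle_kept.
have [/eqP yx | nyx] := boolP (y == x.+1 %% n :> nat).
  rewrite (cycle_edgeE yx) /=.
  have -> // : (y == (x + n.-1) %% n :> nat) = false.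
  by move: yx; rewrite modn_succ_ord // modn_pred_ord //; do 2 case: ifP; lia.
rewrite orbF -eq_modn_succ_pred //.
have [/eqP xy | //] := boolP (x == y.+1 %% n :> nat).
rewrite setUC (cycle_edgeE xy) (@cycle_edge_eqmod _ (x + n.-1)) //.
by rewrite (modn_small yn); apply/eqP; rewrite -eq_modn_succ_pred // xy.
Qed.

Lemma cycle_deg S (x : 'I_n) :
  deg (adj_minus (cycle_adj n) S) x = cycle_kept S (x + n.-1) + cycle_kept S x.
Proof.
have xn := ltn_ord x.
apply: deg_two_candidates; first exact: cycle_adj_minusE.
- by move=> _ _; rewrite modn_succ_ord // modn_pred_ord //; do 2 case: ifP; lia.
- by move=> _; rewrite ltn_mod; lia.
- by move=> _; rewrite ltn_mod; lia.
Qed.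

Lemma cycle_locally_irregularP S :
  reflect (forall i, cycle_kept S i ->
             cycle_kept S (i + n.-1) != cycle_kept S i.+1)
          (locally_irregularb (adj_minus (cycle_adj n) S)).
Proof.
have n_gt0 : 0 < n by lia.
apply: (iffP forallP) => [irr i ki | paired x].
  have /forallP/(_ (Ordinal (ltn_pmod i.+1 n_gt0)))/implyP :=
    irr (Ordinal (ltn_pmod i n_gt0)).
  rewrite cycle_adj_minusE !cycle_deg /=.
  have -> : i.+1 == (i %% n).+1 %[mod n] by rewrite -[(i %% n).+1]addn1 modnDml addn1.
  rewrite !cycle_kept_modnDl cycle_kept_succ_pred !cycle_kept_modn ki orbT.
  move=> /(_ isT).
  by case: (cycle_kept S (i + n.-1)); case: (cycle_kept S i.+1).
apply/forallP => y; apply/implyP; rewrite cycle_adj_minusE !cycle_deg.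
case/orP => /andP[/eqP -> ky]; have := paired _ ky.
  rewrite cycle_kept_modnDl cycle_kept_modn -addSn cycle_kept_succ_pred ky.
  by case: (cycle_kept S x); case: (cycle_kept S (x + n.-1 + n.-1)).
rewrite cycle_kept_modnDl cycle_kept_succ_pred cycle_kept_modn ky.
by case: (cycle_kept S (x + n.-1)); case: (cycle_kept S x.+1).
Qed.

Lemma cycle_edge_setE X :
  X \in edge_set (cycle_adj n) -> exists2 i, i < n & X = cycle_edge i.
Proof.
case/imset2P => x y _; rewrite inE /cycle_adj => /orP[] /eqP yx ->.
  by exists x => //; apply: cycle_edgeE.
by exists y => //; rewrite setUC; apply: cycle_edgeE.
Qed.

Lemma cycle_edge_in i : i < n -> cycle_edge i \in edge_set (cycle_adj n).
Proof.
move=> i_lt; have i1n : i.+1 %% n < n by rewrite ltn_mod; lia.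
apply/imset2P; exists (Ordinal i_lt) (Ordinal i1n); rewrite ?inE /cycle_adj ?eqxx //.
by rewrite (@cycle_edgeE (Ordinal i_lt) (Ordinal i1n)).
Qed.

Lemma cycle_edge_inj : {in [pred i | i < n] &, injective cycle_edge}.
Proof.
move=> i j; rewrite !inE => i_lt j_lt /setP eij.
have i1n : i.+1 %% n < n by rewrite ltn_mod; lia.
have := eij (Ordinal i_lt); have := eij (Ordinal i1n); rewrite !inE /= !eqxx ?orbT.
rewrite (modn_small i_lt) (modn_small j_lt) (modn_succ_ord i_lt) (modn_succ_ord j_lt).
do 2 case: ifP; lia.
Qed.

Lemma card_cycle_irregulator (S : {set {set 'I_n}}) :
  S \subset edge_set (cycle_adj n) ->
  #|S| = n - \sum_(0 <= i < n) cycle_kept S i.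
Proof.
move=> sub.
by rewrite (card_edge_subset cycle_edge_setE cycle_edge_inj sub) big_mkord.
Qed.

Lemma cycle_kept_pattern i :
  cycle_kept (removed_edges n cycle_edge (fun i => kept_pattern n i.+1)) i =
  kept_pattern n (i %% n).+1.
Proof.
rewrite -cycle_kept_modn /cycle_kept (notin_removed_edges cycle_edge_inj) //.
by rewrite ltn_mod; lia.
Qed.

Lemma cycle_Ie_le : Ie (cycle_adj n) <= n - 2 * (n %/ 3).
Proof.
have n_gt0 : 0 < n by lia.
pose S := removed_edges n cycle_edge (fun i => kept_pattern n i.+1).
have sub : S \subset edge_set (cycle_adj n) by exact/removed_edges_sub/cycle_edge_in.
have -> : 2 * (n %/ 3) = \sum_(0 <= i < n) cycle_kept S i.
  rewrite -sum_kept_pattern_succ; apply: eq_big_nat => i /andP[_ i_lt].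
  by rewrite cycle_kept_pattern modn_small.
rewrite -card_cycle_irregulator //; apply: Ie_le_card sub _.
apply/cycle_locally_irregularP => i; rewrite !cycle_kept_pattern.
have -> : (i + n.-1) %% n = (i %% n + n.-1) %% n by rewrite modnDml.
have -> : i.+1 %% n = (i %% n).+1 %% n by rewrite -[(i %% n).+1]addn1 modnDml addn1.
have := ltn_pmod i n_gt0; move: (i %% n) => x x_lt.
rewrite modn_pred_ord // modn_succ_ord //.
by do 2 case: ifP; rewrite /kept_pattern; lia.
Qed.

Lemma cycle_Ie_ge : n - 2 * (n %/ 3) <= Ie (cycle_adj n).
Proof.
apply: Ie_ge => S sub /cycle_locally_irregularP paired.
rewrite card_cycle_irregulator // leq_sub2l //.
have [j nkj] : exists j, ~~ cycle_kept S j.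
  have : ~~ [&& cycle_kept S 0, cycle_kept S n.-1 & cycle_kept S 1].
    by apply/and3P => -[k0 k1 k2]; have := paired 0 k0; rewrite add0n k1 k2.
  by rewrite !negb_and => /or3P[]; eexists; eassumption.
have per i : nat_of_bool (cycle_kept S (i + n)) = cycle_kept S i.
  by rewrite cycle_kept_addn.
rewrite -(sum_periodic_shift j per).
apply: sum_paired_le => [||i /andP[i_gt0 _] ki]; rewrite ?addn0 ?cycle_kept_addn //.
have := paired _ ki.
have -> : j + i + n.-1 = (j + i.-1).+1 + n.-1 by lia.
by rewrite cycle_kept_succ_pred addnS.
Qed.

End Cycle.

Lemma cycle_Ie n : 3 <= n -> Ie (cycle_adj n) = n - 2 * (n %/ 3).
Proof. by move=> n_ge3; apply/eqP; rewrite eqn_leq cycle_Ie_le // cycle_Ie_ge. Qed.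

Theorem theorem4 :
  (forall n : nat, 2 <= n ->
     [/\ n %% 3 = 1 -> Ie (path_adj n) = (n - 1) %/ 3,
         n %% 3 = 2 -> Ie (path_adj n) = ceil_div (n - 1) 3
       & n %% 3 = 0 -> Ie (path_adj n) = (n - 1) %/ 3]) /\
  (forall n : nat, 3 <= n -> Ie (cycle_adj n) = Ie (path_adj n) + 1).
Proof.
split=> [n _ | n n_ge3]; first by rewrite path_Ie /ceil_div; split; lia.
by rewrite cycle_Ie // path_Ie; lia.
Qed.
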